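(* Let $q$ be a prime power, $n\ge 1$, and $1\le k\le n(q-1)$. Then $C_{n,k}^q$ is self-dual (i.e. $C_{n,k}^q=(C_{n,k}^q)^\perp$) if and only if $q$ and $n$ are both odd and $k=\frac{n(q-1)}{2}$.
   Context: For a prime power $q$ and integers $n\ge 1$, $k\ge 0$, the projective Reed-Muller code $C_{n,k}^q\subseteq \mathbb{F}_q^N$, $N=\frac{q^{n+1}-1}{q-1}$, is defined as follows. For each point of $\mathbb{P}^n(\mathbb{F}_q)$ choose the affine representative $(p_0,\dots,p_n)\in\mathbb{F}_q^{n+1}\setminus\{0\}$ whose left-most nonzero coordinate equals $1$, and fix an ordering $P_1',\dots,P_N'$ of these representatives. Then $C_{n,k}^q=\{(F(P_1'),\dots,F(P_N')) : F\in \mathbb{F}_q[x_0,\dots,x_n]_k\}$, where $\mathbb{F}_q[x_0,\dots,x_n]_k$ is the space of homogeneous polynomials of degree $k$ together with $0$. Duals are taken with respect to the standard dot product on $\mathbb{F}_q^N$. *)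

From HB Require Import structures.
From mathcomp Require Import all_boot all_order all_algebra all_field.
From mathcomp Require Import mpoly.
Set Implicit Arguments. Unset Strict Implicit. Unset Printing Implicit Defensive.
Import GRing.Theory.
Local Open Scope ring_scope.

(* Normalized affine representatives of points of P^n(F): vectors in
   F^(n+1) whose left-most nonzero coordinate equals 1. *)
Definition normalized (F : finFieldType) (n : nat) (v : {ffun 'I_n.+1 -> F}) : bool :=
  [exists i : 'I_n.+1, (v i == 1) && [forall j : 'I_n.+1, (j < i)%N ==> (v j == 0)]].

Definition proj_points (F : finFieldType) (n : nat) : finType :=
  {v : {ffun 'I_n.+1 -> F} | normalized v}.

Definition word (F : finFieldType) (n : nat) : finType := {ffun proj_points F n -> F}.

Definition dotw (F : finFieldType) (n : nat) (c d : word F n) : F :=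
  \sum_(P : proj_points F n) c P * d P.

(* Projective Reed-Muller code C_{n,k}^q, q = #|F|, as a subset of F^N:
   evaluations of homogeneous polynomials of degree k (or 0) in
   x_0..x_n at the normalized representatives. *)
Definition inPRM (F : finFieldType) (n k : nat) (c : word F n) : Prop :=
  exists p : {mpoly F[n.+1]}, p \is k.-homog /\
    c = [ffun P : proj_points F n => p.@[fun i => (val P) i]].

Definition inPRMdual (F : finFieldType) (n k : nat) (c : word F n) : Prop :=
  forall d : word F n, inPRM k d -> dotw c d = 0.

Definition PRM_self_dual (F : finFieldType) (n k : nat) : Prop :=
  forall c : word F n, inPRM k c <-> inPRMdual k c.

From mathcomp Require Import all_boot all_order all_algebra all_field.
From mathcomp Require Import mpoly.
From mathcomp Require Import zify ring.
Set Implicit Arguments. Unset Strict Implicit. Unset Printing Implicit Defensive.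
Import GRing.Theory.
Local Open Scope ring_scope.

(* Over F = F_q the unit power sum \sum_(l != 0) l^m is -1 when q - 1 divides m
   and 0 otherwise.  Each projective point stands for q - 1 = -1 nonzero
   vectors, so summing a monomial of degree divisible by q - 1 over the points
   gives minus its sum over F^(n+1), a product of power sums; this vanishes
   unless every exponent is a positive multiple of q - 1, in particular when the
   degree is below (n + 1)(q - 1).  Hence C_k and C_k' are orthogonal whenever
   k + k' = n(q - 1), and C is self-orthogonal when 2k = n(q - 1).
   Conversely, if 2k > n(q - 1) two monomials of degree k with product
   x_0^a x_1^(q-1) ... x_n^(q-1) are not orthogonal; if 2k < n(q - 1) the same
   happens inside C_(n(q-1)-k), which lies in the dual; and if n is even the
   all-one word is orthogonal to C but not to itself.  Finally, when q - 1 does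
   not divide k, interpolating
   [P = R] = \sum_(l != 0) l^k \prod_i (1 - (P_i - l R_i)^(q-1))
   writes every word of the dual as a combination of monomials which, on the
   points, agree with monomials of degree k. *)

Section PowerSums.
Variable F : finFieldType.
Local Notation q := #|F|.

Lemma card_finField_gt1 : (1 < q)%N.
Proof. exact: finNzRing_gt1. Qed.

Lemma card_finField_gt0 : (0 < q)%N.
Proof. exact: ltnW card_finField_gt1. Qed.

Lemma card_finField_pred_gt0 : (0 < q.-1)%N.
Proof. by have := card_finField_gt1; lia. Qed.

(* Translation by 1 permutes F, so [q%:R] is the difference of two equal sums. *)
Lemma natr_card : q%:R = 0 :> F.
Proof.
have : \sum_(x : F) (x + 1) = \sum_(x : F) x.
  by rewrite [RHS](reindex_inj (addIr (1 : F))).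
rewrite big_split /= => /eqP.
by rewrite -subr_eq0 addrAC subrr add0r sumr_const cardT => /eqP.
Qed.

Lemma expf_card_pred (x : F) : x != 0 -> x ^+ q.-1 = 1.
Proof.
move=> x_neq0; apply: (mulfI x_neq0).
by rewrite -exprS prednK ?expf_card ?mulr1 ?card_finField_gt0.
Qed.

Lemma expf_addn_card_pred (x : F) a t :
  (0 < a)%N -> (q.-1 %| t)%N -> x ^+ (a + t) = x ^+ a.
Proof.
move=> a_gt0 /dvdnP[s ->]; have [->|x_neq0] := eqVneq x 0.
  by rewrite !expr0n addn_eq0 !eqn0Ngt a_gt0.
by rewrite exprD mulnC exprM expf_card_pred // expr1n mulr1.
Qed.

Lemma sumr_nz_const (x : F) : \sum_(l : F | l != 0) x = - x.
Proof.
have : \sum_(l : F) x = x + \sum_(l : F | l != 0) x by rewrite (bigD1 0).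
have -> : \sum_(l : F) x = x *+ q by rewrite sumr_const cardE.
rewrite -mulr_natr natr_card mulr0 => /eqP.
by rewrite eq_sym addr_eq0 => /eqP {2}->; rewrite opprK.
Qed.

Definition unit_power_sum m := \sum_(l : F | l != 0) l ^+ m.
Definition power_sum m := \sum_(l : F) l ^+ m.

(* Otherwise every unit is a root of ['X^(m %% (q - 1)) - 1], which has too
   small a degree. *)
Lemma exists_unit_expr_neq1 m :
  ~~ (q.-1 %| m)%N -> exists2 a : F, a != 0 & a ^+ m != 1.
Proof.
move=> m_ndvd.
have [/existsP[a /andP[? ?]]|/existsPn all1] :=
  boolP [exists a : F, (a != 0) && (a ^+ m != 1)]; first by exists a.
exfalso; set r := (m %% q.-1)%N.
have r_gt0 : (0 < r)%N by rewrite lt0n -/(dvdn _ _).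
have r_lt : (r < q.-1)%N by rewrite ltn_pmod ?card_finField_pred_gt0.
have unit_root (a : F) : a != 0 -> a ^+ r = 1.
  move=> a_neq0; have := all1 a; rewrite a_neq0 /= negbK => /eqP.
  by rewrite {1}(divn_eq m q.-1) exprD mulnC exprM expf_card_pred // expr1n mul1r.
have := @max_poly_roots F ('X^r - 1) (enum (predC1 (0 : F))).
rewrite size_XnsubC // -cardE cardC1 -size_poly_eq0 size_XnsubC //.
have -> : all (root ('X^r - 1)) (enum (predC1 (0 : F))).
  apply/allP => a; rewrite mem_enum /= => a_neq0.
  by rewrite /root !hornerE unit_root // subrr.
by rewrite enum_uniq => /(_ isT isT isT); rewrite ltnS leqNgt r_lt.
Qed.

Lemma unit_power_sumE m :
  unit_power_sum m = if (q.-1 %| m)%N then -1 else 0.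
Proof.
case: ifPn => [/dvdnP[t ->]|/exists_unit_expr_neq1[a a_neq0 am_neq1]].
  rewrite /unit_power_sum -(sumr_nz_const 1); apply: eq_bigr => l l_neq0.
  by rewrite mulnC exprM expf_card_pred // expr1n.
have : unit_power_sum m = a ^+ m * unit_power_sum m.
  rewrite /unit_power_sum [LHS](reindex_inj (mulfI a_neq0)) mulr_sumr.
  apply: eq_big => [l|l _]; first by rewrite mulf_eq0 (negbTE a_neq0).
  by rewrite exprMn.
move/eqP; rewrite -subr_eq0 -{1}(mul1r (unit_power_sum m)) -mulrBl mulf_eq0.
by rewrite subr_eq0 eq_sym (negbTE am_neq1) => /eqP.
Qed.

Lemma power_sumE m :
  power_sum m = if (0 < m)%N && (q.-1 %| m)%N then -1 else 0.
Proof.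
rewrite /power_sum (bigD1 0) //= -/(unit_power_sum m) unit_power_sumE.
by case: m => [|m] /=; rewrite ?dvdn0 expr0n /= ?subrr ?add0r.
Qed.

Lemma ord_le_card_pred (m : 'I_q) : (m <= q.-1)%N.
Proof. by rewrite -ltnS prednK ?card_finField_gt0 ?ltn_ord. Qed.

(* [(s - x) * sum = s^q - x^q = s - x] by Fermat. *)
Lemma sum_card_pred_homog (x s : F) :
  \sum_(m < q) x ^+ m * s ^+ (q.-1 - m) = (x != s)%:R.
Proof.
have [->|x_neq_s] := eqVneq x s.
  under eq_bigr => m _ do rewrite -exprD subnKC ?ord_le_card_pred //.
  by rewrite sumr_const card_ord -[_ *+ q]mulr_natr natr_card mulr0.
have := subrXX s x q; rewrite !expf_card.
under eq_bigr => m _ do rewrite mulrC.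
move=> /esym; rewrite -{2}(mulr1 (s - x)) => /mulfI -> //.
by rewrite subr_eq0 eq_sym.
Qed.

End PowerSums.

Section ProjectivePoints.
Variables (F : finFieldType) (n : nat).
Local Notation vec := {ffun 'I_n.+1 -> F}.
Local Notation point := (proj_points F n).

Definition scalev (l : F) (v : vec) : vec := [ffun i => l * v i].

Lemma scalev0 l : scalev l 0 = 0.
Proof. by apply/ffunP => i; rewrite !ffunE mulr0. Qed.

Lemma scale0v v : scalev 0 v = 0.
Proof. by apply/ffunP => i; rewrite !ffunE mul0r. Qed.

Lemma scale1v v : scalev 1 v = v.
Proof. by apply/ffunP => i; rewrite !ffunE mul1r. Qed.

Lemma scalevA l m v : scalev l (scalev m v) = scalev (l * m) v.
Proof. by apply/ffunP => i; rewrite !ffunE mulrA. Qed.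

Definition lead_index (v : vec) (i : 'I_n.+1) :=
  (v i != 0) && [forall j : 'I_n.+1, (j < i)%N ==> (v j == 0)].

Lemma lead_index_uniq v i j : lead_index v i -> lead_index v j -> i = j.
Proof.
move=> /andP[vi_neq0 /forallP below_i] /andP[vj_neq0 /forallP below_j].
apply/val_inj; case: (ltngtP i j) => // lt_ij.
  by have := below_j i; rewrite lt_ij implyTb (negbTE vi_neq0).
by have := below_i j; rewrite lt_ij implyTb (negbTE vj_neq0).
Qed.

Lemma lead_index_exists v : v != 0 -> exists i, lead_index v i.
Proof.
move=> v_neq0; have [i0 vi0_neq0] : exists i, v i != 0.
  apply/existsP; apply: contraNT v_neq0 => /existsPn v0.
  by apply/eqP/ffunP => i; rewrite ffunE; apply/eqP; have := v0 i; rewrite negbK.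
have [i vi_neq0 i_min] :=
  @arg_minnP _ i0 (fun i => v i != 0) (fun i : 'I_n.+1 => i : nat) vi0_neq0.
exists i; rewrite /lead_index vi_neq0; apply/forallP => j; apply/implyP => lt_ji.
by apply: contraTT lt_ji => vj_neq0; rewrite -leqNgt; apply: i_min.
Qed.

Lemma lead_index_scale l v i :
  l != 0 -> lead_index (scalev l v) i = lead_index v i.
Proof.
move=> l_neq0; rewrite /lead_index !ffunE mulf_eq0 (negbTE l_neq0) /=.
by congr andb; apply: eq_forallb => j; rewrite ffunE mulf_eq0 (negbTE l_neq0).
Qed.

Definition lead_coefv (v : vec) : F :=
  if [pick i | lead_index v i] is Some i then v i else 0.

Lemma lead_coefvE v i : lead_index v i -> lead_coefv v = v i.
Proof.
rewrite /lead_coefv; case: pickP => [j /lead_index_uniq eq_ji /eq_ji ->|] //.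
by move=> /(_ i) ->.
Qed.

Lemma lead_coefv0 : lead_coefv 0 = 0.
Proof. by rewrite /lead_coefv; case: pickP => // i; rewrite /lead_index ffunE eqxx. Qed.

Lemma lead_coefv_neq0 v : v != 0 -> lead_coefv v != 0.
Proof. by case/lead_index_exists => i vi; rewrite (lead_coefvE vi); case/andP: vi. Qed.

Lemma lead_coefv_scale l v :
  l != 0 -> lead_coefv (scalev l v) = l * lead_coefv v.
Proof.
move=> l_neq0; have [->|v_neq0] := eqVneq v 0.
  by rewrite scalev0 lead_coefv0 mulr0.
have [i vi] := lead_index_exists v_neq0.
by rewrite (lead_coefvE vi) (@lead_coefvE _ i) ?ffunE ?lead_index_scale.
Qed.

Lemma normalized_lead_index v : normalized v -> exists2 i, lead_index v i & v i = 1.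
Proof.
case/existsP => i /andP[/eqP vi1 below_i]; exists i => //.
by rewrite /lead_index vi1 oner_eq0.
Qed.

Lemma lead_coefv_point (P : point) : lead_coefv (val P) = 1.
Proof. by have [i vi <-] := normalized_lead_index (valP P); apply: lead_coefvE. Qed.

Lemma point_eq_scalev (P R : point) l :
  l != 0 -> (val P == scalev l (val R)) = (l == 1) && (P == R).
Proof.
move=> l_neq0; apply/eqP/andP => [PlR|[/eqP -> /eqP ->]]; last by rewrite scale1v.
have l1 : l = 1.
  by have := lead_coefv_point P; rewrite PlR lead_coefv_scale // lead_coefv_point mulr1.
by split; [rewrite l1 | apply/eqP/val_inj; rewrite PlR l1 scale1v].
Qed.

Lemma point_coord0 (P : point) : val P ord0 = 0 \/ val P ord0 = 1.
Proof.
have [i /andP[_ /forallP below_i] Pi1] := normalized_lead_index (valP P).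
have [<-|i_neq0] := eqVneq i ord0; [by right | left].
apply/eqP/(implyP (below_i ord0)); rewrite lt0n.
by apply: contra i_neq0 => /eqP i0; apply/eqP/val_inj.
Qed.

Definition normalize (v : vec) : vec := scalev (lead_coefv v)^-1 v.

Lemma normalized_normalize v : v != 0 -> normalized (normalize v).
Proof.
move=> v_neq0; have [i vi] := lead_index_exists v_neq0.
have inv_neq0 : (lead_coefv v)^-1 != 0 by rewrite invr_eq0 lead_coefv_neq0.
have := vi; rewrite -(lead_index_scale _ _ inv_neq0) => /andP[_ below_i].
apply/existsP; exists i; rewrite below_i andbT /normalize ffunE (lead_coefvE vi).
by rewrite mulVf //; case/andP: vi.
Qed.

Lemma normalized_unit_vector : normalized [ffun i : 'I_n.+1 => (i == ord0)%:R : F].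
Proof. by apply/existsP; exists ord0; rewrite ffunE eqxx eqxx; apply/forallP. Qed.

Definition point0 : point := Sub _ normalized_unit_vector.

Definition point_of (v : vec) : point := insubd point0 (normalize v).

Lemma val_point_of v : v != 0 -> val (point_of v) = normalize v.
Proof. by move=> v_neq0; rewrite insubdK //; apply: normalized_normalize. Qed.

Lemma sum_nz_vec (g : vec -> F) :
  \sum_(v : vec | v != 0) g v =
  \sum_(P : point) \sum_(l : F | l != 0) g (scalev l (val P)).
Proof.
rewrite (reindex_onto (fun p : point * F => scalev p.2 (val p.1))
                      (fun v => (point_of v, lead_coefv v))) /=; last first.
  move=> v v_neq0; rewrite val_point_of // /normalize scalevA.
  by rewrite divff ?lead_coefv_neq0 ?scale1v.
rewrite pair_big_dep /=; apply: eq_bigl => -[P l] /=.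
have [->|l_neq0] := eqVneq l 0; first by rewrite scale0v eqxx.
have lead_lP : lead_coefv (scalev l (val P)) = l.
  by rewrite lead_coefv_scale // lead_coefv_point mulr1.
have lP_neq0 : scalev l (val P) != 0.
  by apply: contra_neq l_neq0 => lP0; rewrite -lead_lP lP0 lead_coefv0.
rewrite lP_neq0 lead_lP; apply/eqP; congr pair; apply: val_inj.
by rewrite val_point_of // /normalize lead_lP scalevA mulVf ?scale1v.
Qed.

(* Each point represents [q - 1 = -1] nonzero vectors. *)
Lemma sum_points_homog (h : vec -> F) :
  (forall l v, l != 0 -> h (scalev l v) = h v) ->
  \sum_(P : point) h (val P) = h 0 - \sum_(v : vec) h v.
Proof.
move=> h_homog; rewrite (bigD1 (0 : vec)) //= sum_nz_vec.
have -> : \sum_(P : point) \sum_(l : F | l != 0) h (scalev l (val P)) =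
          - \sum_(P : point) h (val P).
  rewrite -sumrN; apply: eq_bigr => P _.
  under eq_bigr => l l_neq0 do rewrite h_homog //.
  exact: sumr_nz_const.
by rewrite opprD opprK addNKr.
Qed.

Lemma sum_points1 : \sum_(P : point) (1 : F) = 1.
Proof.
rewrite (sum_points_homog (h := fun=> 1)) // sumr_const card_ffun card_ord.
by rewrite -mulr_natr mul1r natrX natr_card expr0n subr0.
Qed.

End ProjectivePoints.

Section Monomials.
Variables (F : finFieldType) (n : nat).
Local Notation q := #|F|.
Local Notation vec := {ffun 'I_n.+1 -> F}.
Local Notation point := (proj_points F n).

Definition monom (e : 'I_n.+1 -> nat) (v : vec) : F := \prod_i v i ^+ e i.
Definition tdeg (e : 'I_n.+1 -> nat) := (\sum_i e i)%N.
Definition monom_word e : word F n := [ffun P : point => monom e (val P)].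

Lemma monomD a b v : monom a v * monom b v = monom (fun i => a i + b i)%N v.
Proof. by rewrite /monom -big_split /=; apply: eq_bigr => i _; rewrite exprD. Qed.

Lemma tdegD a b : tdeg (fun i => a i + b i)%N = (tdeg a + tdeg b)%N.
Proof. by rewrite /tdeg big_split. Qed.

Lemma monom_scalev l v e : monom e (scalev l v) = l ^+ tdeg e * monom e v.
Proof.
rewrite /monom (eq_bigr (fun i => l ^+ e i * v i ^+ e i)) => [|i _].
  by rewrite big_split /= prodrXr.
by rewrite ffunE exprMn.
Qed.

Lemma tdeg_gt0 e : (0 < tdeg e)%N -> exists i, (0 < e i)%N.
Proof.
move=> deg_gt0; apply/existsP; apply: contraTT deg_gt0 => /existsPn e0.
by rewrite -leqNgt leqn0 /tdeg sum_nat_eq0; apply/forallP => i; rewrite -leqn0 leqNgt e0.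
Qed.

Lemma monom0 e : (0 < tdeg e)%N -> monom e 0 = 0.
Proof.
by case/tdeg_gt0 => i ei_gt0; rewrite /monom (bigD1 i) //= ffunE expr0n eqn0Ngt ei_gt0 mul0r.
Qed.

Lemma sum_vec_monom e : \sum_(v : vec) monom e v = \prod_i power_sum F (e i).
Proof. by rewrite /monom /power_sum bigA_distr_bigA. Qed.

Lemma sum_points_monom e : (q.-1 %| tdeg e)%N -> (0 < tdeg e)%N ->
  \sum_(P : point) monom e (val P) = - \prod_i power_sum F (e i).
Proof.
move=> /dvdnP[t deg_e] deg_gt0.
rewrite sum_points_homog ?monom0 ?sum_vec_monom ?sub0r // => l v l_neq0.
by rewrite monom_scalev deg_e mulnC exprM expf_card_pred // expr1n mul1r.
Qed.

Lemma prod_power_sum_eq0 e :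
  (tdeg e < n.+1 * q.-1)%N -> \prod_i power_sum F (e i) = 0.
Proof.
move=> deg_lt; have [/existsP[i ei_lt]|/existsPn e_ge] := boolP [exists i, e i < q.-1]%N.
  rewrite (bigD1 i) //= power_sumE; case: ifP => [/andP[ei_gt0 dvd]|_]; last by rewrite mul0r.
  by have := dvdn_leq ei_gt0 dvd; rewrite leqNgt ei_lt.
move: deg_lt; rewrite ltnNge => /negP; case.
have -> : (n.+1 * q.-1 = \sum_(i < n.+1) q.-1)%N by rewrite sum_nat_const card_ord.
by apply: leq_sum => i _; rewrite leqNgt e_ge.
Qed.

(* Only the monomials with every exponent a positive multiple of [q - 1]
   have nonzero sum over the points. *)
Lemma sum_points_monom_eq0 e : (q.-1 %| tdeg e)%N -> (0 < tdeg e)%N ->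
  (tdeg e < n.+1 * q.-1)%N -> \sum_(P : point) monom e (val P) = 0.
Proof. by move=> dvd deg_gt0 deg_lt; rewrite sum_points_monom // prod_power_sum_eq0 ?oppr0. Qed.

Lemma sum_points_monom_full :
  \sum_(P : point) monom (fun=> q.-1) (val P) = - (-1) ^+ n.+1.
Proof.
have deg_full : tdeg (fun=> q.-1) = (n.+1 * q.-1)%N by rewrite /tdeg sum_nat_const card_ord.
rewrite sum_points_monom ?deg_full ?dvdn_mull ?muln_gt0 ?card_finField_pred_gt0 //.
by rewrite power_sumE card_finField_pred_gt0 dvdnn prodr_const card_ord.
Qed.

Lemma dotwC (c d : word F n) : dotw c d = dotw d c.
Proof. by apply: eq_bigr => P _; rewrite mulrC. Qed.

Lemma dotw_monom a b :
  dotw (monom_word a) (monom_word b) = \sum_(P : point) monom (fun i => a i + b i)%N (val P).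
Proof. by apply: eq_bigr => P _; rewrite !ffunE monomD. Qed.

End Monomials.
Arguments monom_word {F n} e.

Section Code.
Variables (F : finFieldType) (n k : nat).
Local Notation q := #|F|.

Lemma inPRM_monom e : tdeg e = k -> inPRM k (@monom_word F n e).
Proof.
move=> deg_e; exists 'X_[[multinom e i | i < n.+1]]; split.
  rewrite dhomogX /= mdegE; apply/eqP; rewrite -deg_e.
  by apply: eq_bigr => i _; rewrite mnmE.
by apply/ffunP => P; rewrite !ffunE mevalX; apply: eq_bigr => i _; rewrite mnmE.
Qed.

Lemma inPRM0 : inPRM k (0 : word F n).
Proof. by exists 0; split; [exact: dhomog0 | apply/ffunP => P; rewrite !ffunE meval0]. Qed.

Lemma inPRMD (c d : word F n) : inPRM k c -> inPRM k d -> inPRM k (c + d).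
Proof.
move=> [p [p_homog ->]] [p' [p'_homog ->]]; exists (p + p'); split; first exact: dhomogD.
by apply/ffunP => P; rewrite !ffunE mevalD.
Qed.

Lemma inPRMZ a (c : word F n) : inPRM k c -> inPRM k [ffun P => a * c P].
Proof.
move=> [p [p_homog ->]]; exists (a *: p); split; first exact: dhomogZ.
by apply/ffunP => P; rewrite !ffunE mevalZ.
Qed.

Lemma inPRM_sum (I : finType) (c : I -> word F n) :
  (forall i, inPRM k (c i)) -> inPRM k (\sum_i c i).
Proof. by move=> c_in; apply: (big_ind (inPRM k)); [exact: inPRM0 | exact: inPRMD |]. Qed.

(* On the points, [x_i ^ a] agrees with [x_i ^ (a + t (q - 1))] when [a > 0]. *)
Lemma inPRM_monom_lift e : (0 < tdeg e)%N -> (tdeg e <= k)%N ->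
  (q.-1 %| k - tdeg e)%N -> inPRM k (@monom_word F n e).
Proof.
move=> /tdeg_gt0[i0 ei0_gt0] deg_le dvd.
pose e' i := (e i + (i == i0) * (k - tdeg e))%N.
have -> : monom_word e = monom_word e' :> word F n.
  apply/ffunP => P; rewrite !ffunE; apply: eq_bigr => i _; rewrite /e'.
  have [->|_] := eqVneq i i0; last by rewrite mul0n addn0.
  by rewrite mul1n expf_addn_card_pred.
apply: inPRM_monom; rewrite /tdeg /e' big_split /= -/(tdeg e) (bigD1 i0) //= eqxx mul1n.
by rewrite big1 ?addn0 ?subnKC // => i /negbTE ->.
Qed.

Lemma inPRMdual_monom (c : word F n) :
  (forall e, tdeg e = k -> dotw c (monom_word e) = 0) -> inPRMdual k c.
Proof.
move=> c_orth d [p [p_homog ->]]; rewrite /dotw.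
under eq_bigr => P _ do rewrite ffunE mevalE mulr_sumr.
rewrite exchange_big /=; apply: big1_seq => m /andP[_ m_supp].
rewrite (eq_bigr (fun P => p@_m * (c P * monom_word (fun i => m i) P))) => [|P _].
  by rewrite -mulr_sumr -/(dotw c _) c_orth ?mulr0 // /tdeg -mdegE (dhomog_mf p_homog m_supp).
by rewrite ffunE /monom mulrCA.
Qed.

End Code.

Lemma sum_minn_shift (Q K N : nat) :
  (\sum_(i < N) minn Q (K - i * Q))%N = minn K (N * Q).
Proof.
elim: N => [|N IH]; first by rewrite big_ord0 mul0n; lia.
by rewrite big_ord_recr /= IH mulSn; lia.
Qed.

Section Orthogonality.
Variables (F : finFieldType) (n : nat).
Local Notation q := #|F|.

Lemma dotw_monom_eq0 a b : (0 < n)%N -> (tdeg a + tdeg b = n * q.-1)%N ->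
  dotw (@monom_word F n a) (monom_word b) = 0.
Proof.
move=> n_gt0 deg_ab; rewrite dotw_monom sum_points_monom_eq0 // tdegD deg_ab.
- exact: dvdn_mull.
- by rewrite muln_gt0 n_gt0 card_finField_pred_gt0.
- by rewrite ltn_mul2r card_finField_pred_gt0 /=.
Qed.

Lemma PRM_orth k k' (c d : word F n) : (0 < n)%N -> (k + k' = n * q.-1)%N ->
  inPRM k c -> inPRM k' d -> dotw c d = 0.
Proof.
move=> n_gt0 deg_kk' c_in; apply: inPRMdual_monom => e' deg_e'.
rewrite dotwC; apply: (inPRMdual_monom (k := k)) c_in => e deg_e.
by apply: dotw_monom_eq0; rewrite // deg_e deg_e' addnC.
Qed.

(* For [K > n (q - 1) / 2], [a] fills the exponents of [x_1, ..., x_n]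
   greedily up to [K], and [b] completes [a] to
   [x_0^(2K - n(q - 1)) x_1^(q - 1) ... x_n^(q - 1)]; as [x_0] is [0] or [1]
   on the points, [a b] sums like [x_0^(q-1) ... x_n^(q-1)]. *)
Lemma exists_PRM_nonorth K : (n * q.-1 < K.*2)%N -> (K <= n * q.-1)%N ->
  exists c d : word F n, [/\ inPRM K c, inPRM K d & dotw c d != 0].
Proof.
set Q := q.-1 => K2_gt K_le; have Q_gt0 : (0 < Q)%N := card_finField_pred_gt0 F.
pose a (i : 'I_n.+1) := if i == 0 :> nat then 0%N else minn Q (K - i.-1 * Q).
pose e (i : 'I_n.+1) := if i == 0 :> nat then (K.*2 - n * Q)%N else Q.
pose b i := (e i - a i)%N.
have a_le_e i : (a i <= e i)%N by rewrite /a /e; case: eqP => // _; apply: geq_minl.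
have deg_a : tdeg a = K.
  rewrite /tdeg big_ord_recl /= add0n.
  under eq_bigr => j _ do rewrite /a lift0 /=.
  by rewrite sum_minn_shift; apply/minn_idPl.
have deg_e : tdeg e = K.*2.
  rewrite /tdeg big_ord_recl /=; under eq_bigr => j _ do rewrite /e lift0 /=.
  by rewrite sum_nat_const card_ord /e /=; lia.
have deg_b : tdeg b = K.
  have : (tdeg b + tdeg a = tdeg e)%N.
    by rewrite /tdeg -big_split /=; apply: eq_bigr => i _; rewrite subnK.
  by rewrite deg_a deg_e; lia.
exists (monom_word a), (monom_word b).
split; [exact: inPRM_monom | exact: inPRM_monom |].
have -> : dotw (@monom_word F n a) (monom_word b) =
          \sum_(P : proj_points F n) monom (fun=> Q) (val P).
  rewrite dotw_monom; apply: eq_bigr => P _; apply: eq_bigr => i _.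
  rewrite /b subnKC // /e; have [->|i_neq0] := eqVneq i ord0; last first.
    by case: eqP => // i0; case/eqP: i_neq0; apply/val_inj.
  case: (point_coord0 P) => ->; rewrite ?expr1n // !expr0n /=.
  by rewrite subn_eq0 leqNgt K2_gt eqn0Ngt Q_gt0.
by rewrite sum_points_monom_full oppr_eq0 expf_neq0 // oppr_eq0 oner_eq0.
Qed.

Lemma self_dual_double_deg k : PRM_self_dual F n k ->
  (0 < n)%N -> (k <= n * q.-1)%N -> (k * 2 = n * q.-1)%N.
Proof.
move=> sd n_gt0 k_le; case: (ltngtP (n * q.-1) (k * 2)) => // [k2_gt|k2_lt].
  have [|c [d [c_in d_in /eqP[]]]] := @exists_PRM_nonorth k _ k_le.
    by rewrite -muln2.
  exact: (sd c).1 d d_in.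
have k'2_gt : (n * q.-1 < (n * q.-1 - k).*2)%N by lia.
have [c [d [c_in d_in /eqP[]]]] := exists_PRM_nonorth k'2_gt (leq_subr k _).
have c_in_k : inPRM k c by apply/sd => e e_in; apply: PRM_orth c_in e_in; lia.
by apply: PRM_orth c_in_k d_in; lia.
Qed.

(* For even [n], the all-one word is orthogonal to [C], but not to itself:
   its norm is the number of points, which is [1] in [F]. *)
Lemma self_dual_odd_dim k : PRM_self_dual F n k ->
  (0 < k)%N -> (k * 2 = n * q.-1)%N -> odd n.
Proof.
move=> sd k_gt0 k2; apply: contraT => n_even.
have k_eq : k = (n./2 * q.-1)%N.
  apply/eqP; rewrite -(eqn_pmul2r (isT : (0 < 2)%N)) k2 mulnAC muln2.
  by rewrite -[X in (X * _)%N](odd_double_half n) (negbTE n_even).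
pose one : word F n := [ffun=> 1].
have one_dual : inPRMdual k one.
  apply: inPRMdual_monom => e deg_e.
  rewrite /dotw (eq_bigr (fun P => monom e (val P))) => [|P _]; last by rewrite !ffunE mul1r.
  rewrite sum_points_monom_eq0 // deg_e ?k_eq ?dvdn_mull // -?k_eq //.
  by have := card_finField_pred_gt0 F; rewrite mulSn; lia.
have := one_dual one ((sd one).2 one_dual).
rewrite /dotw (eq_bigr (fun=> 1)) => [|P _]; last by rewrite ffunE mul1r.
by rewrite sum_points1 => /eqP; rewrite oner_eq0.
Qed.

End Orthogonality.

Lemma natr_eq_ffun (R : comPzSemiRingType) (I : finType) (T : eqType) (v w : {ffun I -> T}) :
  (v == w)%:R = \prod_i (v i == w i)%:R :> R.
Proof.
have [->|/eqP v_neq_w] := eqVneq v w; first by rewrite big1 // => i _; rewrite eqxx.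
have [i vwi] : exists i, v i != w i.
  by apply/existsP; apply: contra_notT v_neq_w => /existsPn vw; apply/ffunP => i; apply/eqP/negPn.
by rewrite (bigD1 i) //= (negbTE vwi) mul0r.
Qed.

Lemma complement_leq_dvd_sub (Q k a b : nat) : (Q %| a + b)%N -> (Q %| k + b)%N ->
  (k < b)%N -> (a + b <= k * 2 + Q)%N -> (a <= k)%N /\ (Q %| k - a)%N.
Proof.
move=> /dvdnP[u ab] /dvdnP[w kb] k_lt ab_le.
have uQ_le : (u * Q <= w * Q)%N.
  apply: leq_mul (leqnn Q); rewrite leqNgt; apply/negP => lt_wu.
  by have := leq_mul lt_wu (leqnn Q); rewrite mulSn; lia.
split; first lia.
by rewrite (_ : k - a = (w - u) * Q)%N ?dvdn_mull // mulnBl; lia.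
Qed.

Section DualInCode.
Variables (F : finFieldType) (n k : nat).
Local Notation q := #|F|.
Local Notation point := (proj_points F n).
Local Notation J := ('I_q * 'I_q)%type.

(* Coefficients of [1 - (x - s)^(q - 1)], the interpolation of [[x = s]]. *)
Definition interp_coef (mj : J) : F :=
  ((mj.1 == 0 :> nat) && (mj.2 == 0 :> nat))%:R - (mj.1 + mj.2 == q.-1)%N%:R.

Lemma interp_coef_neq0 (mj : J) :
  interp_coef mj != 0 -> (mj.1 + mj.2 == 0)%N || (mj.1 + mj.2 == q.-1)%N.
Proof.
apply: contraR => /norP[mj_neq0 /negbTE mj_neq]; rewrite /interp_coef mj_neq subr0.
rewrite (_ : _ && _ = false) ?eqxx //.
by apply: contraNF mj_neq0 => /andP[/eqP -> /eqP ->].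
Qed.

Lemma natr_eq_expand (x s : F) :
  (x == s)%:R = \sum_(mj : J) interp_coef mj * x ^+ mj.1 * s ^+ mj.2.
Proof.
pose o0 : 'I_q := Ordinal (card_finField_gt0 F).
under eq_bigr do rewrite !mulrBl; rewrite sumrB.
have -> : \sum_(mj : J) ((mj.1 == 0 :> nat) && (mj.2 == 0 :> nat))%:R * x ^+ mj.1 * s ^+ mj.2 = 1.
  rewrite (bigD1 (o0, o0)) //= !expr0 !mulr1 big1 ?addr0 // => -[m j] /= mj_neq0.
  have [m0|] := eqVneq (m : nat) 0%N; have [j0|] := eqVneq (j : nat) 0%N; rewrite ?mul0r //.
  by case/eqP: mj_neq0; congr pair; apply/val_inj.
rewrite -(pair_bigA _ (fun m j : 'I_q => (m + j == q.-1)%N%:R * x ^+ m * s ^+ j)) /=.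
under eq_bigr => m _.
  have j_lt : (q.-1 - m < q)%N by have := card_finField_gt0 F; lia.
  rewrite (bigD1 (Ordinal j_lt)) //= subnKC ?ord_le_card_pred // eqxx mul1r.
  rewrite big1 ?addr0 => [|j j_neq]; last first.
    have [mj|] := eqVneq (m + j)%N q.-1; rewrite ?mul0r //.
    by case/eqP: j_neq; apply/val_inj => /=; rewrite -mj addKn.
  over.
by rewrite sum_card_pred_homog; case: (x == s); rewrite ?subr0 ?subrr.
Qed.

Definition lexp (f : {ffun 'I_n.+1 -> J}) i : nat := (f i).1.
Definition rexp (f : {ffun 'I_n.+1 -> J}) i : nat := (f i).2.

Lemma natr_eq_point_scalev_expand (P R : point) (l : F) :
  (val P == scalev l (val R))%:R = \sum_(f : {ffun 'I_n.+1 -> J})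
    (\prod_i interp_coef (f i)) * monom (lexp f) (val P) *
    (l ^+ tdeg (rexp f) * monom (rexp f) (val R)).
Proof.
rewrite natr_eq_ffun.
under eq_bigr => i _ do rewrite ffunE natr_eq_expand.
rewrite bigA_distr_bigA; apply: eq_bigr => f _.
under eq_bigr => i _ do rewrite exprMn.
by rewrite !big_split /= prodrXr.
Qed.

(* Summing [l^k [P = l R]] over the units [l] picks out [l = 1]; expanding
   [[P = l R]] coordinatewise, the sum over [l] produces unit power sums. *)
Lemma natr_eq_point_expand (P R : point) :
  (P == R)%:R = \sum_(f : {ffun 'I_n.+1 -> J})
    (\prod_i interp_coef (f i)) * monom (lexp f) (val P) *
    unit_power_sum F (k + tdeg (rexp f)) * monom (rexp f) (val R).
Proof.
have -> : (P == R)%:R = \sum_(l : F | l != 0) l ^+ k * (val P == scalev l (val R))%:R.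
  rewrite (bigD1 1) ?oner_neq0 //= point_eq_scalev ?oner_neq0 // eqxx expr1n mul1r.
  rewrite big1 ?addr0 // => l /andP[l_neq0 l_neq1].
  by rewrite point_eq_scalev // (negbTE l_neq1) mulr0.
under eq_bigr => l _ do rewrite natr_eq_point_scalev_expand mulr_sumr.
rewrite exchange_big /=; apply: eq_bigr => f _.
rewrite /unit_power_sum mulr_sumr mulr_suml; apply: eq_bigr => l _.
by rewrite exprD; ring.
Qed.

Definition expand_coef (c : word F n) (f : {ffun 'I_n.+1 -> J}) : F :=
  (\prod_i interp_coef (f i)) * unit_power_sum F (k + tdeg (rexp f)) *
  dotw c (monom_word (rexp f)).

Lemma word_expand (c : word F n) :
  c = \sum_(f : {ffun 'I_n.+1 -> J}) [ffun P => expand_coef c f * monom_word (lexp f) P].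
Proof.
apply/ffunP => P; rewrite sum_ffunE.
have -> : c P = \sum_(R : point) c R * (P == R)%:R.
  rewrite (bigD1 P) //= eqxx mulr1 big1 ?addr0 // => R R_neq_P.
  by rewrite eq_sym (negbTE R_neq_P) mulr0.
under eq_bigr => R _ do rewrite natr_eq_point_expand mulr_sumr.
rewrite exchange_big /=; apply: eq_bigr => f _.
rewrite !ffunE /expand_coef; move: (unit_power_sum _ _) => S.
rewrite /dotw [RHS]mulrC !mulr_sumr; apply: eq_bigr => R _.
by rewrite ffunE; ring.
Qed.

(* A nonzero term of the expansion of [c] has [l_i + r_i] in [{0, q - 1}],
   [deg r = -k] mod [q - 1] and [x^r] outside [C], which forces [deg r > k];
   then [deg l <= k] and [deg l = k] mod [q - 1]. *)
Lemma PRM_dual_sub (c : word F n) : (k * 2 = n * q.-1)%N -> ~~ (q.-1 %| k)%N ->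
  inPRMdual k c -> inPRM k c.
Proof.
move=> k2 k_ndvd c_dual.
have lift e : (tdeg e <= k)%N -> (q.-1 %| k - tdeg e)%N -> inPRM k (@monom_word F n e).
  move=> deg_le dvd; apply: inPRM_monom_lift => //.
  by rewrite lt0n; apply: contra k_ndvd => /eqP deg0; rewrite deg0 subn0 in dvd.
rewrite [c]word_expand; apply: inPRM_sum => f.
have [coef0|] := eqVneq (expand_coef c f) 0.
  suff -> : [ffun P => expand_coef c f * monom_word (lexp f) P] = 0 by exact: inPRM0.
  by apply/ffunP => P; rewrite !ffunE coef0 mul0r.
rewrite /expand_coef !mulf_eq0 !negb_or => /andP[/andP[interp_neq0 S_neq0] dot_neq0].
apply: inPRMZ.
have exp_sum i : (lexp f i + rexp f i == 0)%N || (lexp f i + rexp f i == q.-1)%N.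
  by apply: interp_coef_neq0; move/prodf_neq0: interp_neq0; apply.
have r_dvd : (q.-1 %| k + tdeg (rexp f))%N.
  by move: S_neq0; apply: contraR => ndvd; rewrite unit_power_sumE (negbTE ndvd) eqxx.
have r_notin : ~ inPRM k (@monom_word F n (rexp f)).
  by move=> r_in; move/eqP: dot_neq0; apply; apply: c_dual.
have k_lt : (k < tdeg (rexp f))%N.
  rewrite ltnNge; apply/negP => r_le; apply/r_notin/lift => //.
  have -> : (k - tdeg (rexp f) = k * 2 - (k + tdeg (rexp f)))%N by lia.
  by rewrite dvdn_sub // k2 dvdn_mull.
have deg_lr : (tdeg (lexp f) + tdeg (rexp f) = \sum_i (lexp f i + rexp f i))%N.
  by rewrite /tdeg big_split.
have [||l_le l_dvd] :=
  @complement_leq_dvd_sub q.-1 k (tdeg (lexp f)) (tdeg (rexp f)) _ r_dvd k_lt.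
- by rewrite deg_lr; apply: dvdn_sum => i _; case/orP: (exp_sum i) => /eqP ->.
- rewrite deg_lr k2.
  have -> : (n * q.-1 + q.-1 = \sum_(i < n.+1) q.-1)%N.
    by rewrite sum_nat_const card_ord mulSn addnC.
  by apply: leq_sum => i _; case/orP: (exp_sum i) => /eqP ->.
exact: lift.
Qed.

End DualInCode.

Lemma PRM_self_dual_half (F : finFieldType) (n k : nat) : (0 < n)%N ->
  (k * 2 = n * #|F|.-1)%N -> ~~ (#|F|.-1 %| k)%N -> PRM_self_dual F n k.
Proof.
move=> n_gt0 k2 k_ndvd c; split => [c_in d|]; last exact: PRM_dual_sub.
by apply: PRM_orth c_in => //; rewrite addnn -muln2.
Qed.

Lemma half_mul_even_ndvd (n Q : nat) :
  odd n -> ~~ odd Q -> (0 < Q)%N -> ~~ (Q %| (n * Q) %/ 2)%N.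
Proof.
move=> n_odd Q_even Q_gt0; have [h Qh] : exists h, Q = (h * 2)%N.
  by exists Q./2; rewrite muln2 -{1}(odd_double_half Q) (negbTE Q_even).
have h_gt0 : (0 < h)%N by lia.
by rewrite Qh mulnA mulnK // [(h * 2)%N]mulnC dvdn_pmul2r // dvdn2 n_odd.
Qed.

Theorem mainTheorem4 (F : finFieldType) (n k : nat) :
  (1 <= n)%N -> (1 <= k)%N -> (k <= n * (#|F| - 1))%N ->
  PRM_self_dual F n k <->
  [/\ odd #|F|, odd n & k = (n * (#|F| - 1)) %/ 2]%N.
Proof.
rewrite subn1 => n_gt0 k_gt0 k_le.
have odd_card : odd #|F| = ~~ odd #|F|.-1.
  by rewrite -{1}(prednK (card_finField_gt0 F)).
split => [sd | [card_odd n_odd ->]].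
  have k2 := self_dual_double_deg sd n_gt0 k_le.
  have n_odd := self_dual_odd_dim sd k_gt0 k2.
  split => //; last by rewrite -k2 mulnK.
  by rewrite odd_card; move/(congr1 odd): k2; rewrite !oddM n_odd andbF /= => <-.
have Q_even : ~~ odd #|F|.-1 by rewrite -odd_card.
apply: PRM_self_dual_half => //; last exact: half_mul_even_ndvd (card_finField_pred_gt0 F).
by rewrite divnK // dvdn2 oddM negb_and Q_even orbT.
Qed.
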